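(* Let $\mathcal V$ be braided monoidal closed and complete, and let $A$ be a semi-Hopf $\mathcal V$-category with object set $X$ whose underlying $\mathcal V$-category is Frobenius. Then $\int^\ell_{A,x}\cong I$ in $\mathcal V$ for all $x\in X$. More precisely, if $(e,\nu)$ is a Frobenius system, the morphism $u_x\colon I\to\int^\ell_{A,x}$ induced by the left integral family $t^{yx}=(1\otimes\epsilon_{xy})\circ e^{yx}$ is an isomorphism with inverse $\nu_x\circ\tau_{xx}$.
   Context: $\mathcal V$: braided monoidal closed with all limits, tensor $\otimes$, unit $I$, braiding $\sigma$. A $\mathcal V$-category $A$ with object set $X$: objects $A_{x,y}$, compositions $m_{xyz}\colon A_{x,y}\otimes A_{y,z}\to A_{x,z}$, units $j_x\colon I\to A_{x,x}$, associative and unital. Semi-Hopf: each $A_{x,y}$ is a comonoid $(\delta_{xy},\epsilon_{xy})$ in $\mathcal V$ with all $m_{xyz},j_x$ comonoid morphisms. Casimir family: morphisms $e^{xy}\colon I\to A_{x,y}\otimes A_{y,x}$ with $(m_{zxy}\otimes1)\circ(1_{A_{z,x}}\otimes e^{xy})=(1\otimes m_{yzx})\circ(e^{zy}\otimes1_{A_{z,x}})$ for all $x,y,z$. A Frobenius system is a Casimir family $e$ together with morphisms $\nu_x\colon A_{x,x}\to I$ ($x\in X$) such that $(\nu_x\otimes1)\circ e^{xx}=j_x=(1\otimes\nu_x)\circ e^{xx}$. A $\mathcal V$-category is Frobenius if it admits a Frobenius system. Left integral space: for $z\in X$, $\int^\ell_{A,z}$ is the object with morphisms $\tau_{yz}\colon\int^\ell_{A,z}\to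 A_{y,z}$ ($y\in X$) satisfying $m_{xyz}\circ(1_{A_{x,y}}\otimes\tau_{yz})=\epsilon_{xy}\otimes\tau_{xz}$ for all $x,y$, universal among objects $W$ with families $w_y\colon W\to A_{y,z}$ satisfying the same equations (unique factorization). Morphisms $I\to\int^\ell_{A,z}$ thus correspond to families $t^{yz}\colon I\to A_{y,z}$ with $m_{xyz}\circ(1\otimes t^{yz})=t^{xz}\circ\epsilon_{xy}$. *)

From Stdlib Require Import Logic.

Record BraidedMonCat := {
  ob : Type;
  hom : ob -> ob -> Type;
  idm : forall a, hom a a;
  comp : forall {a b c}, hom b c -> hom a b -> hom a c;
  comp_assoc : forall a b c d (f : hom a b) (g : hom b c) (h : hom c d),
      comp h (comp g f) = comp (comp h g) f;
  comp_id_l : forall a b (f : hom a b), comp (idm b) f = f;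
  comp_id_r : forall a b (f : hom a b), comp f (idm a) = f;

  tens : ob -> ob -> ob;
  tensm : forall {a a' b b'}, hom a a' -> hom b b' -> hom (tens a b) (tens a' b');
  tens_id : forall a b, tensm (idm a) (idm b) = idm (tens a b);
  tens_comp : forall a a' a'' b b' b''
      (f : hom a a') (f' : hom a' a'') (g : hom b b') (g' : hom b' b''),
      tensm (comp f' f) (comp g' g) = comp (tensm f' g') (tensm f g);

  unit : ob;

  assoc : forall a b c, hom (tens (tens a b) c) (tens a (tens b c));
  assoc_inv : forall a b c, hom (tens a (tens b c)) (tens (tens a b) c);
  assoc_iso1 : forall a b c, comp (assoc_inv a b c) (assoc a b c) = idm _;
  assoc_iso2 : forall a b c, comp (assoc a b c) (assoc_inv a b c) = idm _;
  assoc_nat : forall a a' b b' c c' (f : hom a a') (g : hom b b') (h : hom c c'),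
      comp (assoc a' b' c') (tensm (tensm f g) h)
      = comp (tensm f (tensm g h)) (assoc a b c);

  lunit : forall a, hom (tens unit a) a;
  lunit_inv : forall a, hom a (tens unit a);
  lunit_iso1 : forall a, comp (lunit_inv a) (lunit a) = idm _;
  lunit_iso2 : forall a, comp (lunit a) (lunit_inv a) = idm _;
  lunit_nat : forall a b (f : hom a b),
      comp f (lunit a) = comp (lunit b) (tensm (idm unit) f);

  runit : forall a, hom (tens a unit) a;
  runit_inv : forall a, hom a (tens a unit);
  runit_iso1 : forall a, comp (runit_inv a) (runit a) = idm _;
  runit_iso2 : forall a, comp (runit a) (runit_inv a) = idm _;
  runit_nat : forall a b (f : hom a b),
      comp f (runit a) = comp (runit b) (tensm f (idm unit));

  pentagon : forall a b c d,
      comp (assoc a b (tens c d)) (assoc (tens a b) c d)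
      = comp (tensm (idm a) (assoc b c d))
             (comp (assoc a (tens b c) d) (tensm (assoc a b c) (idm d)));
  triangle : forall a b,
      comp (tensm (idm a) (lunit b)) (assoc a unit b)
      = tensm (runit a) (idm b);

  braid : forall a b, hom (tens a b) (tens b a);
  braid_inv : forall a b, hom (tens b a) (tens a b);
  braid_iso1 : forall a b, comp (braid_inv a b) (braid a b) = idm _;
  braid_iso2 : forall a b, comp (braid a b) (braid_inv a b) = idm _;
  braid_nat : forall a a' b b' (f : hom a a') (g : hom b b'),
      comp (braid a' b') (tensm f g) = comp (tensm g f) (braid a b);
  hexagon1 : forall a b c,
      comp (assoc b c a) (comp (braid a (tens b c)) (assoc a b c))
      = comp (tensm (idm b) (braid a c))
             (comp (assoc b a c) (tensm (braid a b) (idm c)));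
  hexagon2 : forall a b c,
      comp (assoc_inv c a b) (comp (braid (tens a b) c) (assoc_inv a b c))
      = comp (tensm (braid a c) (idm b))
             (comp (assoc_inv a c b) (tensm (idm a) (braid b c)))
}.

Arguments ob : clear implicits.
Arguments hom {_} _ _.
Arguments idm {_} _.
Arguments comp {_ _ _ _} _ _.
Arguments tens {_} _ _.
Arguments tensm {_ _ _ _ _} _ _.
Arguments unit {_}.
Arguments assoc {_} _ _ _.
Arguments assoc_inv {_} _ _ _.
Arguments lunit {_} _.
Arguments lunit_inv {_} _.
Arguments runit {_} _.
Arguments runit_inv {_} _.
Arguments braid {_} _ _.
Arguments braid_inv {_} _ _.

Declare Scope cat_scope.
Delimit Scope cat_scope with cat.
Open Scope cat_scope.
Notation "g ∘ f" := (comp g f) (at level 40, left associativity) : cat_scope.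
Notation "a ⊗ b" := (tens a b) (at level 30, right associativity) : cat_scope.
Notation "f ⊠ g" := (tensm f g) (at level 30, right associativity) : cat_scope.
Notation "1_ a" := (idm a) (at level 9) : cat_scope.

(* Closedness: every functor (- ⊗ a) has a right adjoint [a, -]. *)
Definition is_closed (V : BraidedMonCat) : Prop :=
  forall a b : ob V, exists (h : ob V) (ev : hom (h ⊗ a) b),
    forall (c : ob V) (f : hom (c ⊗ a) b),
      exists! g : hom c h, ev ∘ (g ⊠ 1_ a) = f.

(* Completeness: all (small) products and all equalizers, hence all
   small limits. *)
Definition has_products (V : BraidedMonCat) : Prop :=
  forall (I : Type) (F : I -> ob V),
    exists (P : ob V) (p : forall i, hom P (F i)),
      forall (c : ob V) (f : forall i, hom c (F i)),
        exists! g : hom c P, forall i, p i ∘ g = f i.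

Definition has_equalizers (V : BraidedMonCat) : Prop :=
  forall (a b : ob V) (f g : hom a b),
    exists (E : ob V) (e : hom E a), f ∘ e = g ∘ e /\
      forall (c : ob V) (h : hom c a), f ∘ h = g ∘ h ->
        exists! k : hom c E, e ∘ k = h.

Definition is_complete (V : BraidedMonCat) : Prop :=
  has_products V /\ has_equalizers V.

Definition interchange {V : BraidedMonCat} (a b c d : ob V)
  : hom ((a ⊗ b) ⊗ (c ⊗ d)) ((a ⊗ c) ⊗ (b ⊗ d)) :=
  assoc_inv a c (b ⊗ d)
  ∘ (1_ a ⊠ assoc c b d)
  ∘ (1_ a ⊠ (braid b c ⊠ 1_ d))
  ∘ (1_ a ⊠ assoc_inv b c d)
  ∘ assoc a b (c ⊗ d).

Record VCat (V : BraidedMonCat) := {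
  vobj : Type;
  vhom : vobj -> vobj -> ob V;
  vcomp : forall x y z, hom (vhom x y ⊗ vhom y z) (vhom x z);
  vunit : forall x, hom unit (vhom x x);
  vcomp_assoc : forall x y z w,
      vcomp x z w ∘ (vcomp x y z ⊠ 1_ (vhom z w))
      = vcomp x y w ∘ (1_ (vhom x y) ⊠ vcomp y z w)
        ∘ assoc (vhom x y) (vhom y z) (vhom z w);
  vcomp_unit_l : forall x y,
      vcomp x x y ∘ (vunit x ⊠ 1_ (vhom x y)) = lunit (vhom x y);
  vcomp_unit_r : forall x y,
      vcomp x y y ∘ (1_ (vhom x y) ⊠ vunit y) = runit (vhom x y)
}.
Arguments vobj {V} _.
Arguments vhom {V} _ _ _.
Arguments vcomp {V} _ _ _ _.
Arguments vunit {V} _ _.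

(* Semi-Hopf V-categories: each A_{x,y} a comonoid, with composition and
   units comonoid morphisms (I ⊗ I and A ⊗ B carry the usual comonoid
   structures, the latter using the braiding). *)
Record SemiHopfVCat (V : BraidedMonCat) := {
  sh_cat :> VCat V;
  cmul : forall x y, hom (vhom sh_cat x y) (vhom sh_cat x y ⊗ vhom sh_cat x y);
  cunit : forall x y, hom (vhom sh_cat x y) unit;
  cmul_coassoc : forall x y,
      assoc _ _ _ ∘ (cmul x y ⊠ 1_ _) ∘ cmul x y
      = (1_ _ ⊠ cmul x y) ∘ cmul x y;
  cmul_counit_l : forall x y,
      lunit _ ∘ (cunit x y ⊠ 1_ _) ∘ cmul x y = 1_ _;
  cmul_counit_r : forall x y,
      runit _ ∘ (1_ _ ⊠ cunit x y) ∘ cmul x y = 1_ _;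
  vcomp_cmul : forall x y z,
      cmul x z ∘ vcomp sh_cat x y z
      = (vcomp sh_cat x y z ⊠ vcomp sh_cat x y z)
        ∘ interchange _ _ _ _
        ∘ (cmul x y ⊠ cmul y z);
  vcomp_cunit : forall x y z,
      cunit x z ∘ vcomp sh_cat x y z = lunit unit ∘ (cunit x y ⊠ cunit y z);
  vunit_cmul : forall x,
      cmul x x ∘ vunit sh_cat x = (vunit sh_cat x ⊠ vunit sh_cat x) ∘ lunit_inv unit;
  vunit_cunit : forall x,
      cunit x x ∘ vunit sh_cat x = 1_ unit
}.
Arguments sh_cat {V} _.
Arguments cmul {V} _ _ _.
Arguments cunit {V} _ _ _.

Section Frob.
Context {V : BraidedMonCat} (A : VCat V).
Local Notation X := (vobj A).
Local Notation "A[ x , y ]" := (vhom A x y).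
Local Notation m := (vcomp A).
Local Notation j := (vunit A).

Definition is_casimir (e : forall x y, hom unit (A[x,y] ⊗ A[y,x])) : Prop :=
  forall x y z,
    (m z x y ⊠ 1_ A[y,x]) ∘ assoc_inv A[z,x] A[x,y] A[y,x]
      ∘ (1_ A[z,x] ⊠ e x y) ∘ runit_inv A[z,x]
    = (1_ A[z,y] ⊠ m y z x) ∘ assoc A[z,y] A[y,z] A[z,x]
      ∘ (e z y ⊠ 1_ A[z,x]) ∘ lunit_inv A[z,x].

Definition is_frobenius_system (e : forall x y, hom unit (A[x,y] ⊗ A[y,x]))
  (nu : forall x, hom A[x,x] unit) : Prop :=
  is_casimir e /\
  forall x, lunit A[x,x] ∘ (nu x ⊠ 1_ A[x,x]) ∘ e x x = j x /\
            runit A[x,x] ∘ (1_ A[x,x] ⊠ nu x) ∘ e x x = j x.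

Definition is_frobenius : Prop :=
  exists e nu, is_frobenius_system e nu.
End Frob.

Section Integrals.
Context {V : BraidedMonCat} (A : SemiHopfVCat V).
Local Notation "A[ x , y ]" := (vhom A x y).
Local Notation m := (vcomp A).

Definition left_integral_family (z : vobj A) (W : ob V)
  (w : forall y, hom W A[y,z]) : Prop :=
  forall x y, m x y z ∘ (1_ A[x,y] ⊠ w y) = lunit A[x,z] ∘ (cunit A x y ⊠ w x).

Definition is_left_integral_space (z : vobj A) (Int : ob V)
  (tau : forall y, hom Int A[y,z]) : Prop :=
  left_integral_family z Int tau /\
  forall (W : ob V) (w : forall y, hom W A[y,z]),
    left_integral_family z W w ->
    exists! g : hom W Int, forall y, tau y ∘ g = w y.

Definition integral_from_casimir (e : forall x y, hom unit (A[x,y] ⊗ A[y,x]))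
  (x y : vobj A) : hom unit A[y,x] :=
  runit A[y,x] ∘ (1_ A[y,x] ⊠ cunit A x y) ∘ e y x.
End Integrals.

Definition is_iso {V : BraidedMonCat} {a b : ob V} (f : hom a b) (g : hom b a) : Prop :=
  g ∘ f = 1_ a /\ f ∘ g = 1_ b.


(* The
   whole argument is phrased through the "Casimir contraction"
       C_{x,y}(h) = ρ ∘ (1 ⊗ h) ∘ α ∘ (e^{yx} ⊗ 1) ∘ λ⁻¹ : W -> A_{y,x}
   of a map h : A_{x,y} ⊗ W -> I.  It is natural in W, it sends
   λ ∘ (ε_xy ⊗ g) to t^{yx} ∘ g, and the Casimir identity turns the
   contraction of k ∘ m into composition with (1 ⊗ k) ∘ e.  From this:
   (1) t is a left integral family (contract with ε ∘ m = ε ⊗ ε);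
   (2) C_{x,y}(ν_x ∘ m_{xyx}) = 1, by the Frobenius condition on ν;
   (3) hence every left integral family T satisfies T_y = t^{yx} ∘ ν_x ∘ T_x;
   (4) ν_x ∘ t^{xx} = 1.
   The theorem follows: the map u induced by t satisfies (ν_x τ_xx) u = 1 by
   (4), and u ν_x τ_xx is an endomorphism of the integral space fixing τ by
   (3), hence the identity by universality.  Closedness
   and completeness of V only serve to guarantee that the integral spaces
   exist; here they are given. *)

Section MonoidalCalculus.
Context {V : BraidedMonCat}.

Lemma cancel_split_mono {a b c : ob V} (i : hom b c) (r : hom c b) :
  r ∘ i = 1_ b -> forall f g : hom a b, i ∘ f = i ∘ g -> f = g.
Proof.
  intros Hri f g E.
  rewrite <- (comp_id_l _ _ _ f), <- (comp_id_l _ _ _ g), <- Hri,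
    <- !comp_assoc, E.
  reflexivity.
Qed.

Lemma cancel_split_epi {a b c : ob V} (p : hom a b) (s : hom b a) :
  p ∘ s = 1_ b -> forall f g : hom b c, f ∘ p = g ∘ p -> f = g.
Proof.
  intros Hps f g E.
  rewrite <- (comp_id_r _ _ _ f), <- (comp_id_r _ _ _ g), <- Hps,
    !comp_assoc, E.
  reflexivity.
Qed.

Lemma tensor_merge {a a' a'' b b' b'' : ob V}
  (f : hom a a') (f' : hom a' a'') (g : hom b b') (g' : hom b' b'') :
  (f' ⊠ g') ∘ (f ⊠ g) = (f' ∘ f) ⊠ (g' ∘ g).
Proof. symmetry. apply tens_comp. Qed.

Lemma tensor_merge_post {a a' a'' b b' b'' d : ob V}
  (f : hom a a') (f' : hom a' a'') (g : hom b b') (g' : hom b' b'')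
  (k : hom (a'' ⊗ b'') d) :
  k ∘ (f' ⊠ g') ∘ (f ⊠ g) = k ∘ ((f' ∘ f) ⊠ (g' ∘ g)).
Proof. rewrite <- comp_assoc, tensor_merge. reflexivity. Qed.

Lemma tensor_split_left {a a' b b' : ob V} (f : hom a a') (g : hom b b') :
  f ⊠ g = (f ⊠ 1_ b') ∘ (1_ a ⊠ g).
Proof. rewrite tensor_merge, comp_id_l, comp_id_r. reflexivity. Qed.

Lemma tensor_split_right {a a' b b' : ob V} (f : hom a a') (g : hom b b') :
  f ⊠ g = (1_ a' ⊠ g) ∘ (f ⊠ 1_ b).
Proof. rewrite tensor_merge, comp_id_l, comp_id_r. reflexivity. Qed.

Lemma tensor_interchange {a a' b b' : ob V} (f : hom a a') (g : hom b b') :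
  (f ⊠ 1_ b') ∘ (1_ a ⊠ g) = (1_ a' ⊠ g) ∘ (f ⊠ 1_ b).
Proof. rewrite <- tensor_split_left, <- tensor_split_right. reflexivity. Qed.

Lemma tensor_id_comp {a b c d : ob V} (f : hom b c) (g : hom c d) :
  1_ a ⊠ (g ∘ f) = (1_ a ⊠ g) ∘ (1_ a ⊠ f).
Proof. rewrite tensor_merge, comp_id_l. reflexivity. Qed.

Lemma rewrite_segment {a b c d : ob V}
  (f : hom b c) (g : hom a b) (h : hom a c) (k : hom c d) :
  f ∘ g = h -> k ∘ f ∘ g = k ∘ h.
Proof. intro E. rewrite <- comp_assoc, E. reflexivity. Qed.

Lemma runit_natural {a b : ob V} (f : hom a b) :
  runit b ∘ (f ⊠ 1_ unit) = f ∘ runit a.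
Proof. symmetry. apply runit_nat. Qed.

Lemma lunit_natural {a b : ob V} (f : hom a b) :
  lunit b ∘ (1_ unit ⊠ f) = f ∘ lunit a.
Proof. symmetry. apply lunit_nat. Qed.

Lemma lunit_inv_natural {a b : ob V} (f : hom a b) :
  lunit_inv b ∘ f = (1_ unit ⊠ f) ∘ lunit_inv a.
Proof.
  apply (cancel_split_mono (lunit b) (lunit_inv b) (lunit_iso1 V b)).
  rewrite comp_assoc, lunit_iso2, comp_id_l, comp_assoc, lunit_natural,
    <- comp_assoc, lunit_iso2, comp_id_r.
  reflexivity.
Qed.

Lemma assoc_inv_natural {a a' b b' c c' : ob V}
  (f : hom a a') (g : hom b b') (h : hom c c') :
  assoc_inv a' b' c' ∘ (f ⊠ (g ⊠ h)) = ((f ⊠ g) ⊠ h) ∘ assoc_inv a b c.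
Proof.
  apply (cancel_split_mono (assoc a' b' c') (assoc_inv a' b' c') (assoc_iso1 V _ _ _)).
  rewrite comp_assoc, assoc_iso2, comp_id_l, comp_assoc, assoc_nat,
    <- comp_assoc, assoc_iso2, comp_id_r.
  reflexivity.
Qed.

Lemma tensor_unit_right_inj {a b : ob V} (f g : hom a b) :
  f ⊠ 1_ unit = g ⊠ 1_ unit -> f = g.
Proof.
  intro E.
  apply (cancel_split_epi (runit a) (runit_inv a) (runit_iso2 V a)).
  rewrite !runit_nat, E. reflexivity.
Qed.

Lemma tensor_unit_left_inj {a b : ob V} (f g : hom a b) :
  1_ unit ⊠ f = 1_ unit ⊠ g -> f = g.
Proof.
  intro E.
  apply (cancel_split_epi (lunit a) (lunit_inv a) (lunit_iso2 V a)).
  rewrite !lunit_nat, E. reflexivity.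
Qed.

(* Kelly's coherence lemma: ρ_{a⊗b} = (1 ⊗ ρ_b) ∘ α_{a,b,I}. *)
Lemma runit_tensor (a b : ob V) :
  runit (a ⊗ b) = (1_ a ⊠ runit b) ∘ assoc a b unit.
Proof.
  apply tensor_unit_right_inj.
  apply (cancel_split_mono (assoc a b unit) (assoc_inv a b unit) (assoc_iso1 V a b unit)).
  rewrite <- triangle, <- tens_id, comp_assoc, assoc_nat, <- comp_assoc, pentagon.
  rewrite !comp_assoc, tensor_merge, comp_id_l, triangle.
  transitivity (assoc a b unit ∘ ((1_ a ⊠ runit b) ⊠ 1_ unit)
                  ∘ (assoc a b unit ⊠ 1_ unit)).
  - rewrite assoc_nat. reflexivity.
  - rewrite <- comp_assoc, tensor_merge, comp_id_l. reflexivity.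
Qed.

Lemma runit_tensor_inv (a b : ob V) :
  1_ a ⊠ runit b = runit (a ⊗ b) ∘ assoc_inv a b unit.
Proof. rewrite runit_tensor, <- comp_assoc, assoc_iso2, comp_id_r. reflexivity. Qed.

(* Kelly's coherence lemma: λ_I = ρ_I. *)
Lemma lunit_unit_eq_runit : lunit (@unit V) = runit unit.
Proof.
  assert (Hrr : runit (@unit V ⊗ unit) = runit unit ⊠ 1_ unit).
  { apply (cancel_split_mono (runit unit) (runit_inv unit) (runit_iso1 V unit)).
    apply runit_nat. }
  apply tensor_unit_left_inj.
  apply (cancel_split_epi (assoc unit unit unit) (assoc_inv unit unit unit)
           (assoc_iso2 V _ _ _)).
  rewrite triangle, <- runit_tensor, Hrr. reflexivity.
Qed.

Lemma runit_point_scalar {a w : ob V} (p : hom unit a) (s : hom w unit) :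
  runit a ∘ (p ⊠ s) ∘ lunit_inv w = p ∘ s.
Proof.
  rewrite tensor_split_left, comp_assoc, runit_natural, <- lunit_unit_eq_runit.
  rewrite <- (comp_assoc _ _ _ _ _ _ (lunit unit)), lunit_natural,
    <- !comp_assoc, lunit_iso2, comp_id_r.
  reflexivity.
Qed.

Lemma lunit_scalar_point {a w : ob V} (p : hom unit a) (s : hom w unit) :
  lunit a ∘ (s ⊠ p) ∘ runit_inv w = p ∘ s.
Proof.
  rewrite tensor_split_right, comp_assoc, lunit_natural, lunit_unit_eq_runit.
  rewrite <- (comp_assoc _ _ _ _ _ _ (runit unit)), runit_natural,
    <- !comp_assoc, runit_iso2, comp_id_r.
  reflexivity.
Qed.

Lemma triangle_contract {a b c : ob V} (f : hom b unit) (g : hom c unit) :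
  (1_ a ⊠ (lunit unit ∘ (f ⊠ g))) ∘ assoc a b c
  = (runit a ∘ (1_ a ⊠ f)) ⊠ g.
Proof.
  transitivity ((1_ a ⊠ lunit unit) ∘ assoc a unit unit ∘ ((1_ a ⊠ f) ⊠ g)).
  - rewrite <- comp_assoc, assoc_nat, comp_assoc, <- tensor_id_comp. reflexivity.
  - rewrite triangle, tensor_merge, comp_id_l. reflexivity.
Qed.

End MonoidalCalculus.

Ltac reassoc := repeat rewrite comp_assoc.
Tactic Notation "chain_rewrite" uconstr(L) :=
  first [ rewrite (rewrite_segment _ _ _ _ L) | rewrite L ]; reassoc.
Tactic Notation "chain_rewrite" "<-" uconstr(L) :=
  first [ rewrite (rewrite_segment _ _ _ _ (eq_sym L)) | rewrite <- L ]; reassoc.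

Section CasimirContraction.
Context {V : BraidedMonCat} (A : SemiHopfVCat V)
  (e : forall x y, hom unit (vhom A x y ⊗ vhom A y x)).

Local Notation "A[ x , y ]" := (vhom A x y).
Local Notation m := (vcomp A).

Definition casimir_contraction (x y : vobj A) {w : ob V}
  (h : hom (A[x,y] ⊗ w) unit) : hom w A[y,x] :=
  runit A[y,x] ∘ (1_ A[y,x] ⊠ h) ∘ assoc A[y,x] A[x,y] w
    ∘ (e y x ⊠ 1_ w) ∘ lunit_inv w.

Lemma casimir_contraction_natural (x y : vobj A) {w w' : ob V}
  (h : hom (A[x,y] ⊗ w') unit) (f : hom w w') :
  casimir_contraction x y h ∘ f = casimir_contraction x y (h ∘ (1_ A[x,y] ⊠ f)).
Proof.
  unfold casimir_contraction. reassoc.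
  chain_rewrite (lunit_inv_natural f).
  chain_rewrite (tensor_interchange (e y x) f).
  rewrite <- tens_id. chain_rewrite (assoc_nat _ _ _ _ _ _ _ _ _ _).
  rewrite tensor_merge_post, comp_id_l. reflexivity.
Qed.

Lemma casimir_contraction_counit (x y : vobj A) {w : ob V} (g : hom w unit) :
  casimir_contraction x y (lunit unit ∘ (cunit A x y ⊠ g))
  = integral_from_casimir A e x y ∘ g.
Proof.
  unfold casimir_contraction, integral_from_casimir.
  rewrite <- (comp_assoc _ _ _ _ _ (assoc _ _ _)), triangle_contract,
    tensor_merge_post, comp_id_r, runit_point_scalar.
  reflexivity.
Qed.

Hypothesis casimir : is_casimir A e.

(* The Casimir identity for (x,y,z), contracted on the A_{y,x} factor by k:
   C_{y,z}(k ∘ m_yzx) = m_zxy ∘ (1 ⊗ (1 ⊗ k) e^{xy}). *)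
Lemma casimir_contraction_eq (x y z : vobj A) (k : hom A[y,x] unit) :
  casimir_contraction y z (k ∘ m y z x)
  = m z x y ∘ (1_ A[z,x] ⊠ (runit A[x,y] ∘ (1_ A[x,y] ⊠ k) ∘ e x y))
      ∘ runit_inv A[z,x].
Proof.
  unfold casimir_contraction.
  transitivity (runit A[z,y] ∘ (1_ A[z,y] ⊠ k)
    ∘ ((1_ A[z,y] ⊠ m y z x) ∘ assoc A[z,y] A[y,z] A[z,x]
       ∘ (e z y ⊠ 1_ A[z,x]) ∘ lunit_inv A[z,x])).
  { rewrite tensor_id_comp. reassoc. reflexivity. }
  rewrite <- (casimir x y z). reassoc.
  chain_rewrite <- (tensor_interchange _ _).
  chain_rewrite (runit_natural _).
  rewrite <- tens_id. chain_rewrite <- (assoc_inv_natural _ _ _).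
  chain_rewrite <- (runit_tensor_inv _ _).
  rewrite !tensor_merge_post, !comp_id_l. reassoc. reflexivity.
Qed.

Lemma casimir_integral_family (x : vobj A) :
  left_integral_family A x unit (integral_from_casimir A e x).
Proof.
  intros w y.
  apply (cancel_split_epi (runit_inv A[w,y]) (runit A[w,y]) (runit_iso1 V _)).
  rewrite lunit_scalar_point.
  transitivity (casimir_contraction x w (cunit A x y ∘ m x w y)).
  { rewrite casimir_contraction_eq. reflexivity. }
  rewrite vcomp_cunit, casimir_contraction_counit. reflexivity.
Qed.

End CasimirContraction.

Section FrobeniusSystem.
Context {V : BraidedMonCat} (A : SemiHopfVCat V)
  (e : forall x y, hom unit (vhom A x y ⊗ vhom A y x))
  (nu : forall x, hom (vhom A x x) unit).
Hypothesis frob : is_frobenius_system A e nu.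

Local Notation "A[ x , y ]" := (vhom A x y).
Local Notation m := (vcomp A).
Local Notation t := (integral_from_casimir A e).

(* The Frobenius condition (1 ⊗ ν_x) e^{xx} = j_x makes the contraction by
   ν_x ∘ m_{xyx} the identity of A_{y,x}. *)
Lemma frobenius_retraction (x y : vobj A) :
  casimir_contraction A e x y (nu x ∘ m x y x) = 1_ A[y,x].
Proof.
  rewrite (casimir_contraction_eq A e (proj1 frob) x x y (nu x)),
    (proj2 (proj2 frob x)), vcomp_unit_r, runit_iso2.
  reflexivity.
Qed.

(* ν_x ∘ t^{xx} = ε_xx ∘ (ν_x ⊗ 1) e^{xx} = ε_xx ∘ j_x = 1. *)
Lemma nu_integral_unit (x : vobj A) : nu x ∘ t x x = 1_ unit.
Proof.
  unfold integral_from_casimir.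
  rewrite <- (vunit_cunit V A x), <- (proj1 (proj2 frob x)). reassoc.
  chain_rewrite (runit_nat _ _ _ (nu x)). chain_rewrite (lunit_nat _ _ _ (cunit A x x)).
  rewrite !tensor_merge_post, !comp_id_l, !comp_id_r, lunit_unit_eq_runit.
  reflexivity.
Qed.

Lemma integral_family_factorization (x : vobj A) (w : ob V)
  (T : forall y, hom w A[y,x]) :
  left_integral_family A x w T -> forall y, T y = t x y ∘ nu x ∘ T x.
Proof.
  intros HT y.
  assert (Hcontract : nu x ∘ m x y x ∘ (1_ A[x,y] ⊠ T y)
                      = lunit unit ∘ (cunit A x y ⊠ (nu x ∘ T x))).
  { rewrite <- comp_assoc, HT, comp_assoc, lunit_nat, <- comp_assoc,
      tensor_merge, comp_id_l.
    reflexivity. }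
  rewrite <- (comp_id_l _ _ _ (T y)), <- (frobenius_retraction x y),
    casimir_contraction_natural, Hcontract, casimir_contraction_counit, comp_assoc.
  reflexivity.
Qed.

End FrobeniusSystem.

Lemma left_integral_space_endo_id {V : BraidedMonCat} (A : SemiHopfVCat V)
  (z : vobj A) (Int : ob V) (tau : forall y, hom Int (vhom A y z)) :
  is_left_integral_space A z Int tau ->
  forall g : hom Int Int, (forall y, tau y ∘ g = tau y) -> g = 1_ Int.
Proof.
  intros [Hfam Huniv] g Hg.
  destruct (Huniv Int tau Hfam) as [g0 [_ Huniq]].
  transitivity g0; [symmetry |]; apply Huniq.
  - exact Hg.
  - intro y. apply comp_id_r.
Qed.

Theorem mainTheorem5 :
  forall (V : BraidedMonCat), is_closed V -> is_complete V ->
  forall (A : SemiHopfVCat V)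
         (e : forall x y, hom unit (vhom A x y ⊗ vhom A y x))
         (nu : forall x, hom (vhom A x x) unit),
  is_frobenius_system A e nu ->
  forall (Int : vobj A -> ob V) (tau : forall z y, hom (Int z) (vhom A y z)),
  (forall z, is_left_integral_space A z (Int z) (tau z)) ->
  forall x : vobj A,
    (exists u : hom unit (Int x),
        forall y, tau x y ∘ u = integral_from_casimir A e x y) /\
    (forall u : hom unit (Int x),
        (forall y, tau x y ∘ u = integral_from_casimir A e x y) ->
        is_iso u (nu x ∘ tau x x)).
Proof.
  intros V _ _ A e nu Hfrob Int tau Hint x.
  split.
  - destruct (proj2 (Hint x) unit (integral_from_casimir A e x)
                (casimir_integral_family A e (proj1 Hfrob) x)) as [u [Hu _]].
    exists u. exact Hu.
  - intros u Hu. split.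
    + rewrite <- comp_assoc, Hu. apply (nu_integral_unit A e nu Hfrob).
    + apply (left_integral_space_endo_id A x (Int x) (tau x) (Hint x)).
      intro y. rewrite !comp_assoc, Hu. symmetry.
      apply (integral_family_factorization A e nu Hfrob x (Int x) (tau x)
               (proj1 (Hint x))).
Qed.
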